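(* Let $A\in\mathbb M_{N\times N}$ and $B=(b_1,\dots,b_M)\in\mathbb M_{N\times M}$ ($1\le M\le N$) satisfy $\mathrm{rank}[b_i,Ab_i,\dots,A^{N-1}b_i]=N$ for every $i=1,\dots,M$. Let $r>0$, $\bar x\in\mathbb R^N$ and $\bar\zeta\in\mathbb S^{N-1}$ be such that $$\bar x=\sum_{i=1}^M\int_0^r e^{-At}b_i\,\mathrm{sign}\big(\langle\bar\zeta,e^{-At}b_i\rangle\big)\,dt.$$ Then $$h(\bar x,\bar\zeta)=-\sum_{i=1}^M\big|\langle\bar\zeta,e^{-Ar}b_i\rangle\big|.$$
   Context: $h$ is the minimized Hamiltonian of the control system $\dot x=Ax+Bu$, $u\in[-1,1]^M$: $h(x,\zeta)=\langle\zeta,Ax\rangle+\min_{u\in[-1,1]^M}\langle\zeta,Bu\rangle$. $\mathbb S^{N-1}$ is the unit sphere. *)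

From HB Require Import structures.
From mathcomp Require Import all_boot all_order all_algebra.
From mathcomp Require Import all_classical all_reals all_analysis.
Set Implicit Arguments. Unset Strict Implicit. Unset Printing Implicit Defensive.
Import Order.TTheory GRing.Theory Num.Theory.
Import numFieldNormedType.Exports.
Local Open Scope classical_set_scope.
Local Open Scope ring_scope.

Section Defs.
Variable R : realType.

Definition expm (n : nat) (M : 'M[R]_n) : 'M[R]_n :=
  \matrix_(i, j) limn (series (fun k : nat => (M ^+ k) i j / (k`!)%:R)).

Definition dotv (n : nat) (u v : 'cV[R]_n) : R := \sum_(k < n) u k 0 * v k 0.

Definition kalman (n : nat) (A : 'M[R]_n) (b : 'cV[R]_n) : 'M[R]_n :=
  \matrix_(k, j) ((A ^+ j) *m b) k 0.

Definition ctrl_cube (m : nat) : set 'cV[R]_m :=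
  [set u | forall j, -1 <= u j 0 <= 1].

(* minimized Hamiltonian h(x,z) = <z,Ax> + min_{u in [-1,1]^m} <z,Bu> *)
Definition hamil (n m : nat) (A : 'M[R]_n) (B : 'M[R]_(n, m))
  (x z : 'cV[R]_n) : R :=
  dotv z (A *m x) + inf ((fun u => dotv z (B *m u)) @` @ctrl_cube m).

End Defs.

From HB Require Import structures.
From mathcomp Require Import all_boot all_order all_algebra.
From mathcomp Require Import all_classical all_reals all_analysis.
From mathcomp Require Import ring.
Set Implicit Arguments. Unset Strict Implicit. Unset Printing Implicit Defensive.
Import Order.TTheory GRing.Theory Num.Theory.
Import numFieldNormedType.Exports.
Local Open Scope classical_set_scope.
Local Open Scope ring_scope.

(* Write phi_i t := <zeta, e^{-tA} b_i>, so that phi_i' t = - <A^T zeta, e^{-tA} b_i>.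
   Then <zeta, A xbar> = <A^T zeta, xbar> = sum_i int_0^r - phi_i' t sg (phi_i t) dt,
   and each integral equals |phi_i 0| - |phi_i r|, since |phi_i| is a primitive of
   phi_i' sg phi_i; this last fact is obtained by differentiating the smooth
   approximations sqrt (phi_i^2 + 1/n^2) of |phi_i| and passing to the limit by
   dominated convergence.  The minimum of <zeta, B u> over the cube is
   - sum_i |<zeta, b_i>| = - sum_i |phi_i 0|, and the terms |phi_i 0| cancel. *)

Section MatrixL1Norm.
Variable R : numDomainType.

Definition mxnorm1 m n (M : 'M[R]_(m, n)) : R := \sum_i \sum_j `|M i j|.

Lemma mxnorm1_ge0 m n (M : 'M[R]_(m, n)) : 0 <= mxnorm1 M.
Proof. by apply: sumr_ge0 => i _; apply: sumr_ge0. Qed.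

Lemma mxnorm1_tr m n (M : 'M[R]_(m, n)) : mxnorm1 M^T = mxnorm1 M.
Proof.
rewrite /mxnorm1 exchange_big; apply: eq_bigr => j _.
by apply: eq_bigr => i _; rewrite mxE.
Qed.

Lemma ler_sum_row_mxnorm1 m n (M : 'M[R]_(m, n)) i :
  \sum_j `|M i j| <= mxnorm1 M.
Proof.
rewrite /mxnorm1 (bigD1 i) //= lerDl.
by apply: sumr_ge0 => k _; apply: sumr_ge0.
Qed.

Lemma ler_normr_mxnorm1 m n (M : 'M[R]_(m, n)) i j : `|M i j| <= mxnorm1 M.
Proof.
apply: le_trans (ler_sum_row_mxnorm1 M i).
by rewrite (bigD1 j) //= lerDl sumr_ge0.
Qed.

Lemma mxnorm1_mul m n p (M : 'M[R]_(m, n)) (P : 'M[R]_(n, p)) :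
  mxnorm1 (M *m P) <= mxnorm1 M * mxnorm1 P.
Proof.
rewrite /mxnorm1 mulr_suml; apply: ler_sum => i _.
apply: (@le_trans _ _ (\sum_k \sum_j `|M i j| * `|P j k|)).
  apply: ler_sum => k _; rewrite mxE (le_trans (ler_norm_sum _ _ _)) //.
  by apply: ler_sum => j _; rewrite normrM.
rewrite exchange_big mulr_suml; apply: ler_sum => j _ /=.
by rewrite -mulr_sumr ler_wpM2l // ler_sum_row_mxnorm1.
Qed.

Lemma mxnorm1_exp_mul n p (A : 'M[R]_n) (P : 'M[R]_(n, p)) k :
  mxnorm1 (A ^+ k *m P) <= mxnorm1 A ^+ k * mxnorm1 P.
Proof.
elim: k => [|k IH]; first by rewrite expr0 mul1mx mul1r.
rewrite exprS -mulmxE -mulmxA (le_trans (mxnorm1_mul _ _)) //.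
by rewrite exprS -mulrA ler_wpM2l ?mxnorm1_ge0.
Qed.

End MatrixL1Norm.

Lemma exprZmx (R : comPzRingType) n (c : R) (M : 'M[R]_n) k :
  (c *: M) ^+ k = c ^+ k *: M ^+ k.
Proof.
elim: k => [|k IH]; first by rewrite !expr0 scale1r.
by rewrite !exprS -!mulmxE IH scalemxAl -scalemxAr scalemxAl scalerA (mulrC c).
Qed.

Section DotProduct.
Variable R : realType.

Lemma dotvE n (u v : 'cV[R]_n) : dotv u v = (u^T *m v) 0 0.
Proof. by rewrite mxE; apply: eq_bigr => k _; rewrite mxE. Qed.

Lemma normr_dotv_le n (u v : 'cV[R]_n) : `|dotv u v| <= mxnorm1 u * mxnorm1 v.
Proof.
rewrite dotvE -(mxnorm1_tr u) (le_trans (ler_normr_mxnorm1 _ 0 0)) //.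
exact: mxnorm1_mul.
Qed.

Lemma dotv_trmx_mul n (A : 'M[R]_n) (u v : 'cV[R]_n) :
  dotv (A^T *m u) v = dotv u (A *m v).
Proof. by rewrite !dotvE trmx_mul trmxK mulmxA. Qed.

Lemma dotv_delta n (l : 'I_n) (v : 'cV[R]_n) : dotv (delta_mx l 0) v = v l 0.
Proof. by rewrite dotvE trmx_delta -rowE mxE. Qed.

End DotProduct.

Lemma cvg_sum (R : realType) (I : Type) (r : seq I) (u : I -> nat -> R)
    (l : I -> R) :
  (forall i, u i n @[n --> \oo] --> l i) ->
  \sum_(i <- r) u i n @[n --> \oo] --> \sum_(i <- r) l i.
Proof.
move=> ul; elim: r => [|a r IH].
  by under eq_fun do rewrite big_nil; rewrite big_nil; exact: cvg_cst.
under eq_fun do rewrite big_cons; rewrite big_cons.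
exact: cvgD.
Qed.

Lemma pseriesN (R : realType) (c : nat -> R) (x : R) :
  pseries (- c) x = - pseries c x.
Proof.
apply/funext => n; transitivity (- pseries c x n); last by [].
by rewrite /pseries /series /= -sumrN; apply: eq_bigr => i _; rewrite mulNr.
Qed.

Lemma is_derive_continuous (R : realType) (f df : R -> R) :
  (forall x, is_derive x (1 : R) f (df x)) -> continuous f.
Proof.
move=> fdf x; apply/differentiable_continuous/derivable1_diffP.
exact: (@ex_derive _ _ _ _ _ _ _ (fdf x)).
Qed.

Section ExpmNForm.
Variables (R : realType) (N : nat) (A : 'M[R]_N).

(* the Taylor coefficients of [t |-> <u, e^{-tA} v>] *)
Definition expmN_coef (u v : 'cV[R]_N) (k : nat) : R :=
  dotv u (A ^+ k *m v) * ((-1) ^+ k / k`!%:R).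

Definition expmN_form (u v : 'cV[R]_N) (t : R) : R :=
  dotv u (expm (- (t *: A)) *m v).

Lemma expmN_coef_bound u v k (x : R) :
  `|expmN_coef u v k * x ^+ k|
    <= mxnorm1 u * mxnorm1 v * exp_coeff (mxnorm1 A * `|x|) k.
Proof.
rewrite /expmN_coef /exp_coeff /= !normrM normrX normrN normr1 expr1n mul1r.
rewrite normfV normr_nat normrX exprMn mulrAC -mulrA.
have -> : mxnorm1 u * mxnorm1 v * (mxnorm1 A ^+ k * `|x| ^+ k / k`!%:R)
    = mxnorm1 u * (mxnorm1 A ^+ k * mxnorm1 v) * (`|x| ^+ k / k`!%:R) by ring.
rewrite ler_wpM2r ?divr_ge0 ?exprn_ge0 // (le_trans (normr_dotv_le _ _)) //.
by rewrite ler_wpM2l ?mxnorm1_ge0 ?mxnorm1_exp_mul.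
Qed.

Lemma is_cvg_pseries_expmN_coef u v (x : R) : cvgn (pseries (expmN_coef u v) x).
Proof.
apply: normed_cvg.
apply: (@series_le_cvg _ _ ((mxnorm1 u * mxnorm1 v) *: exp_coeff (mxnorm1 A * `|x|)))
  => [n|n|n|] /=.
- by [].
- by rewrite !mulr_ge0 ?mxnorm1_ge0 ?exprn_ge0 ?invr_ge0 ?mulr_ge0 ?mxnorm1_ge0.
- exact: expmN_coef_bound.
- exact/is_cvg_seriesZ/is_cvg_series_exp_coeff.
Qed.

Lemma expmN_series_entry_cvg (t : R) l m :
  series (fun k => ((- (t *: A)) ^+ k) l m / k`!%:R) @ \oo
    --> expm (- (t *: A)) l m.
Proof.
have termE k : ((- (t *: A)) ^+ k) l m / k`!%:R
    = expmN_coef (delta_mx l 0) (delta_mx m 0) k * t ^+ k.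
  rewrite /expmN_coef -scaleNr exprZmx mxE dotv_delta -colE mxE (exprNn t).
  ring.
rewrite /expm mxE (funext termE); exact: is_cvg_pseries_expmN_coef.
Qed.

Lemma pseries_expmN_coef_cvg u v t :
  pseries (expmN_coef u v) t @ \oo --> expmN_form u v t.
Proof.
have -> : expmN_form u v t
    = \sum_l \sum_m (u l 0 * v m 0) * expm (- (t *: A)) l m.
  rewrite /expmN_form /dotv; apply: eq_bigr => l _; rewrite mxE mulr_sumr.
  by apply: eq_bigr => m _; ring.
suff -> : pseries (expmN_coef u v) t = fun n => \sum_l \sum_m
    (u l 0 * v m 0) * series (fun k => ((- (t *: A)) ^+ k) l m / k`!%:R) n.
  apply: cvg_sum => l; apply: cvg_sum => m.
  by apply: cvgMr; exact: expmN_series_entry_cvg.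
apply/funext => n; rewrite /pseries /series /=.
under [RHS]eq_bigr do under eq_bigr do rewrite mulr_sumr.
under [RHS]eq_bigr do rewrite exchange_big.
rewrite exchange_big /=; apply: eq_bigr => k _.
rewrite /expmN_coef /dotv !big_distrl /=; apply: eq_bigr => l _.
rewrite mxE !big_distrr !big_distrl /=; apply: eq_bigr => m _.
rewrite -scaleNr exprZmx mxE (exprNn t); ring.
Qed.

Lemma expmN_formE u v t : expmN_form u v t = limn (pseries (expmN_coef u v) t).
Proof. exact/esym/cvg_lim/pseries_expmN_coef_cvg. Qed.

Lemma expmN_form0 u v : expmN_form u v 0 = dotv u v.
Proof.
rewrite -(cvg_lim (@Rhausdorff R) (@pseries_expmN_coef_cvg u v 0)).
apply: cvg_lim => //; rewrite -cvg_shiftS; apply: cvg_near_cst; apply: nearW => n.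
rewrite /pseries /series /= big_nat_recl //= big1 => [|i _]; last first.
  by rewrite expr0n mulr0.
by rewrite /expmN_coef !expr0 mul1mx fact0 divr1 !mulr1 addr0.
Qed.

Lemma pseries_diffs_expmN_coef u v :
  pseries_diffs (expmN_coef u v) = - expmN_coef (A^T *m u) v.
Proof.
apply/funext => n; transitivity (- expmN_coef (A^T *m u) v n); last by [].
rewrite /pseries_diffs /expmN_coef dotv_trmx_mul.
rewrite exprS -mulmxE -mulmxA factS natrM exprS.
have n1_neq0 : n.+1%:R != 0 :> R by rewrite pnatr_eq0.
have fact_neq0 : n`!%:R != 0 :> R by rewrite pnatr_eq0 -lt0n fact_gt0.
by field; rewrite fact_neq0 addrC natr1 n1_neq0.
Qed.

Lemma is_derive_expmN_form u v t :
  is_derive t (1 : R) (expmN_form u v) (- expmN_form (A^T *m u) v t).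
Proof.
have -> : - expmN_form (A^T *m u) v t
    = limn (pseries (pseries_diffs (expmN_coef u v)) t).
  rewrite pseries_diffs_expmN_coef pseriesN limN ?expmN_formE //.
  exact: is_cvg_pseries_expmN_coef.
have -> : expmN_form u v = fun x => limn (pseries (expmN_coef u v) x).
  by apply/funext => x; rewrite expmN_formE.
apply: (@pseries_snd_diffs _ _ (`|t| + 1)).
- exact: is_cvg_pseries_expmN_coef.
- rewrite pseries_diffs_expmN_coef pseriesN; apply: is_cvgN.
  exact: is_cvg_pseries_expmN_coef.
- rewrite pseries_diffs_expmN_coef pseries_diffsN pseries_diffs_expmN_coef opprK.
  exact: is_cvg_pseries_expmN_coef.
- by rewrite [X in _ < X]ger0_norm ?ltrDl // addr_ge0.
Qed.

Lemma continuous_expmN_form u v : continuous (expmN_form u v).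
Proof. exact: is_derive_continuous (is_derive_expmN_form u v). Qed.

Lemma continuous_expmN_entry (v : 'cV[R]_N) k :
  continuous (fun t : R => (expm (- (t *: A)) *m v) k 0).
Proof.
have -> : (fun t => (expm (- (t *: A)) *m v) k 0) = expmN_form (delta_mx k 0) v.
  by apply/funext => t; rewrite /expmN_form dotv_delta.
exact: continuous_expmN_form.
Qed.

End ExpmNForm.

Section SmoothedAbs.
Variables (R : realType) (f : R -> R).

Definition smooth_abs (n : nat) (t : R) : R :=
  Num.sqrt (f t ^+ 2 + harmonic n ^+ 2).

Definition smooth_sg (n : nat) (t : R) : R := f t / smooth_abs n t.

Lemma smooth_abs_gt0 n t : 0 < smooth_abs n t.
Proof.
rewrite sqrtr_gt0 ltr_wpDl ?sqr_ge0 // exprn_gt0 //.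
by rewrite /harmonic /= invr_gt0 ltr0n.
Qed.

Lemma smooth_abs_cvg t : smooth_abs n t @[n --> \oo] --> `|f t|.
Proof.
rewrite -sqrtr_sqr -[X in Num.sqrt X]addr0.
apply: (continuous_cvg _ (@sqrt_continuous R _)).
apply: cvgD; first exact: cvg_cst.
under eq_fun do rewrite expr2.
by rewrite -(mulr0 (0 : R)); apply: cvgM; exact: cvg_harmonic.
Qed.

Lemma normr_smooth_sg_le1 n t : `|smooth_sg n t| <= 1.
Proof.
rewrite /smooth_sg normrM normfV (gtr0_norm (smooth_abs_gt0 n t)).
rewrite ler_pdivrMr ?smooth_abs_gt0 // mul1r -sqrtr_sqr ler_sqrt ?lerDl ?sqr_ge0 //.
by rewrite addr_ge0 ?sqr_ge0.
Qed.

Lemma smooth_sg_cvg t : smooth_sg n t @[n --> \oo] --> Num.sg (f t).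
Proof.
have [ft0|ft0] := eqVneq (f t) 0.
  rewrite ft0 sgr0; apply: cvg_near_cst; apply: nearW => n.
  by rewrite /smooth_sg ft0 mul0r.
have -> : Num.sg (f t) = f t * `|f t|^-1.
  by rewrite -{2}(mulr_sg_norm (f t)) mulfK // normr_eq0.
apply: cvgM; first exact: cvg_cst.
by apply: cvgV; [rewrite normr_eq0 | exact: smooth_abs_cvg].
Qed.

Lemma continuous_smooth_sg n : continuous f -> continuous (smooth_sg n).
Proof.
move=> cf x; apply: cvgM; first exact: cf.
apply: cvgV; first by rewrite gt_eqF // smooth_abs_gt0.
apply: (continuous_cvg _ (@sqrt_continuous R _)).
apply: cvgD; last exact: cvg_cst.
by under eq_fun do rewrite expr2; rewrite expr2; apply: cvgM; exact: cf.
Qed.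

Lemma is_derive_smooth_abs (df : R -> R) n x :
  (forall x, is_derive x (1 : R) f (df x)) ->
  is_derive x (1 : R) (smooth_abs n) (df x * smooth_sg n x).
Proof.
move=> fdf.
pose sq t := f t ^+ 2 + harmonic n ^+ 2.
have dsq : is_derive x (1 : R) sq ((2%:R * f x ^+ 1) *: df x + 0).
  exact: is_deriveD (is_deriveX 2 (fdf x)) (is_derive_cst _ _ _).
have sq_gt0 : 0 < sq x by rewrite -sqrtr_gt0 smooth_abs_gt0.
have := is_derive1_comp (is_derive1_sqrt sq_gt0) dsq.
have s_neq0 := gt_eqF (smooth_abs_gt0 n x).
rewrite /smooth_sg /smooth_abs /sq in s_neq0 *; congr is_derive.
by rewrite expr1 addr0 /GRing.scale /=; field; rewrite s_neq0.
Qed.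

End SmoothedAbs.

Section IntegralSign.
Variables (R : realType) (f c : R -> R) (a b : R).
Hypotheses (cf : continuous f) (cc : continuous c).

Let smooth_integrand n t := c t * smooth_sg f n t.

Let smooth_integrand_cvg t :
  smooth_integrand n t @[n --> \oo] --> c t * Num.sg (f t).
Proof. by apply: cvgM; [exact: cvg_cst | exact: smooth_sg_cvg]. Qed.

Let measurable_smooth_integrand n : measurable_fun `[a, b] (smooth_integrand n).
Proof.
apply: measurable_funTS; apply: measurable_realfun.continuous_measurable_fun => x.
by apply: cvgM; [exact: cc | exact: continuous_smooth_sg].
Qed.

Lemma measurable_mul_sg : measurable_fun `[a, b] (fun t => c t * Num.sg (f t)).
Proof.
apply: (measurable_realfun.measurable_fun_cvg (h := smooth_integrand)).
  exact: measurable_smooth_integrand.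
by move=> x _; exact: smooth_integrand_cvg.
Qed.

Let integrable_normr_c :
  lebesgue_measure.-integrable `[a, b] (EFin \o (fun t => `|c t|)).
Proof.
apply: continuous_compact_integrable; first exact: segment_compact.
apply: continuous_subspaceT => x; apply: continuous_comp; first exact: cc.
exact: norm_continuous.
Qed.

Lemma integrable_mul_sg :
  lebesgue_measure.-integrable `[a, b] (EFin \o (fun t => c t * Num.sg (f t))).
Proof.
apply: le_integrable integrable_normr_c => //.
  by apply/measurable_realfun.measurable_EFinP; exact: measurable_mul_sg.
move=> x _; rewrite /= lee_fin normr_id normrM -[X in _ <= X]mulr1.
by rewrite ler_wpM2l // normr_sg; case: (_ == 0).
Qed.

Lemma integral_mul_smooth_sg_cvg :
  (\int[lebesgue_measure]_(t in `[a, b]) (c t * smooth_sg f n t)%:E)%E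
    @[n --> \oo] -->
  (\int[lebesgue_measure]_(t in `[a, b]) (c t * Num.sg (f t))%:E)%E.
Proof.
apply: (@dominated_cvg _ _ _ lebesgue_measure _ (measurable_itv _) _ _
  (EFin \o (fun t => `|c t|)) _ _ _ integrable_normr_c).
- move=> n; apply/measurable_realfun.measurable_EFinP.
  exact: measurable_smooth_integrand.
- by move=> x _; apply: cvg_EFin; [exact: nearW | exact: smooth_integrand_cvg].
- by [].
- move=> n x _; rewrite /= lee_fin normrM -[X in _ <= X]mulr1.
  by rewrite ler_wpM2l // normr_smooth_sg_le1.
Qed.

End IntegralSign.

Lemma integral_mul_sg (R : realType) (f c : R -> R) (a b : R) : a < b ->
  (forall x, is_derive x (1 : R) f (- c x)) -> continuous c ->
  \int[lebesgue_measure]_(t in `[a, b]) (c t * Num.sg (f t)) = `|f a| - `|f b|.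
Proof.
move=> ab fdf cc; have cf := is_derive_continuous fdf.
pose G n t := - smooth_abs f n t.
have dG n x : is_derive x (1 : R) (G n) (c x * smooth_sg f n x).
  by rewrite -[_ * _]opprK -mulNr; exact/is_deriveN/is_derive_smooth_abs.
have ftc n : (\int[lebesgue_measure]_(t in `[a, b]) (c t * smooth_sg f n t)%:E)%E
    = ((G n b)%:E - (G n a)%:E)%E.
  apply: continuous_FTC2 => //.
  - apply: continuous_subspaceT => x; apply: cvgM; first exact: cc.
    exact: continuous_smooth_sg.
  - split.
    + by move=> x _; exact: (@ex_derive _ _ _ _ _ _ _ (dG n x)).
    + by apply: cvg_at_right_filter; exact: (is_derive_continuous (dG n)).
    + by apply: cvg_at_left_filter; exact: (is_derive_continuous (dG n)).
  - by move=> x _; rewrite derive1E; exact: derive_val.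
have G_cvg : (G n b - G n a)%:E @[n --> \oo] --> (`|f a| - `|f b|)%:E.
  have -> : `|f a| - `|f b| = - `|f b| - - `|f a| by rewrite opprK addrC.
  apply: cvg_EFin; first exact: nearW.
  by apply: cvgB; apply: cvgN; exact: smooth_abs_cvg.
rewrite /Rintegral; have := integral_mul_smooth_sg_cvg (a := a) (b := b) cf cc.
under eq_fun do rewrite ftc -EFinB.
move=> /(cvg_lim (@ereal_hausdorff R)) <-.
by rewrite (cvg_lim (@ereal_hausdorff R) G_cvg).
Qed.

Lemma Rintegral_sum d (T : measurableType d) (R : realType)
    (mu : {measure set T -> \bar R}) (D : set T) (I : Type) (s : seq I)
    (F : I -> T -> R) :
  measurable D -> (forall i, mu.-integrable D (EFin \o F i)) ->
  \int[mu]_(x in D) (\sum_(i <- s) F i x) = \sum_(i <- s) \int[mu]_(x in D) F i x.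
Proof.
move=> mD intF; elim: s => [|a s IH].
  by under eq_fun do rewrite big_nil; rewrite big_nil /Rintegral integral0.
under eq_fun do rewrite big_cons; rewrite big_cons RintegralD ?IH //.
have -> : EFin \o (fun x => \sum_(i <- s) F i x) = fun x => \sum_(i <- s) (EFin \o F i) x.
  by apply/funext => x; rewrite /= sumEFin.
exact: integrable_sum.
Qed.

Lemma inf_dotv_ctrl_cube (R : realType) N M (B : 'M[R]_(N, M)) (z : 'cV[R]_N) :
  inf ((fun u => dotv z (B *m u)) @` @ctrl_cube R M)
    = - \sum_(j < M) `|dotv z (col j B)|.
Proof.
have dotv_mulmx u : dotv z (B *m u) = \sum_(j < M) dotv z (col j B) * u j 0.
  rewrite /dotv; under eq_bigr do rewrite mxE big_distrr /=.
  rewrite exchange_big /=; apply: eq_bigr => j _.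
  by rewrite big_distrl /=; apply: eq_bigr => k _; rewrite mxE mulrA.
have lb : lbound ((fun u => dotv z (B *m u)) @` @ctrl_cube R M)
    (- \sum_(j < M) `|dotv z (col j B)|).
  move=> _ [u cube_u <-]; rewrite dotv_mulmx -sumrN; apply: ler_sum => j _.
  rewrite lerNl (le_trans (ler_norm _)) // normrN normrM.
  by rewrite -[X in _ <= X]mulr1 ler_wpM2l // ler_norml cube_u.
(* the minimum is attained at the bang-bang control [u_j = - sg <z, b_j>] *)
have attained : ((fun u => dotv z (B *m u)) @` @ctrl_cube R M)
    (- \sum_(j < M) `|dotv z (col j B)|).
  exists (\col_(j < M) (- Num.sg (dotv z (col j B)))).
    by move=> j; rewrite mxE -ler_norml normrN normr_sg; case: (_ != 0).
  rewrite dotv_mulmx -sumrN; apply: eq_bigr => j _.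
  by rewrite mxE normrEsg mulrN mulrC.
apply/le_anti/andP; split; first by apply: ge_inf attained; exists (- \sum_(j < M) `|dotv z (col j B)|).
by apply: lb_le_inf => //; exists (- \sum_(j < M) `|dotv z (col j B)|).
Qed.

Lemma sum_mul_integral_expmN_sg (R : realType) N (A : 'M[R]_N) (z b : 'cV[R]_N) r :
  0 < r ->
  \sum_k (A^T *m z) k 0 * \int[lebesgue_measure]_(t in `[0, r])
      ((expm (- (t *: A)) *m b) k 0 * Num.sg (expmN_form A z b t))
    = `|dotv z b| - `|expmN_form A z b r|.
Proof.
move=> r_gt0.
pose F k t := (expm (- (t *: A)) *m b) k 0 * Num.sg (expmN_form A z b t).
have integrable_F k : lebesgue_measure.-integrable `[0, r] (EFin \o F k).
  apply: integrable_mul_sg; first exact: continuous_expmN_form.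
  exact: continuous_expmN_entry.
have integrable_wF k : lebesgue_measure.-integrable `[0, r]
    (EFin \o (fun t => (A^T *m z) k 0 * F k t)).
  rewrite (_ : EFin \o _ = fun t => (((A^T *m z) k 0)%:E * (EFin \o F k) t)%E) //.
  by apply: integrableZl; first exact: measurable_itv.
transitivity (\int[lebesgue_measure]_(t in `[0, r]) \sum_k (A^T *m z) k 0 * F k t).
  have := Rintegral_sum (mu := lebesgue_measure) (index_enum 'I_N) (measurable_itv `[0, r]) integrable_wF.
  move=> /= ->; apply: eq_bigr => k _.
  by rewrite RintegralZl //; exact: measurable_itv.
transitivity (\int[lebesgue_measure]_(t in `[0, r])
    (expmN_form A (A^T *m z) b t * Num.sg (expmN_form A z b t))).
  apply: eq_Rintegral => t _.
  by rewrite /expmN_form /dotv big_distrl; apply: eq_bigr => k _; rewrite mulrA.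
have dexpmN x : is_derive x (1 : R) (expmN_form A z b)
    (- expmN_form A (A^T *m z) b x) by exact: is_derive_expmN_form.
have := integral_mul_sg r_gt0 dexpmN (@continuous_expmN_form _ _ A _ _).
by rewrite expmN_form0.
Qed.

Theorem lemma4p2 (R : realType) (N M : nat)
  (A : 'M[R]_N) (B : 'M[R]_(N, M)) (r : R) (xbar zbar : 'cV[R]_N) :
  (1 <= M)%N -> (M <= N)%N ->
  (forall i : 'I_M, \rank (kalman A (col i B)) = N) ->
  0 < r ->
  dotv zbar zbar = 1 ->
  (forall k : 'I_N,
     xbar k 0 = \sum_(i < M)
       \int[lebesgue_measure]_(t in `[0, r])
          ((expm (- (t *: A)) *m col i B) k 0 *
           Num.sg (dotv zbar (expm (- (t *: A)) *m col i B)))) ->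
  hamil A B xbar zbar =
    - \sum_(i < M) `| dotv zbar (expm (- (r *: A)) *m col i B) |.
Proof.
move=> _ _ _ r_gt0 _ xbarE.
rewrite /hamil inf_dotv_ctrl_cube -dotv_trmx_mul.
have -> : dotv (A^T *m zbar) xbar = \sum_(i < M)
    (`|dotv zbar (col i B)| - `|expmN_form A zbar (col i B) r|).
  rewrite /dotv; under eq_bigr do rewrite xbarE big_distrr /=.
  rewrite exchange_big /=; apply: eq_bigr => i _.
  exact: sum_mul_integral_expmN_sg.
by rewrite sumrB addrC addKr.
Qed.
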